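(* Let $A$ be an $n\times n$ binary matrix with zero diagonal. Then there is a homeomorphism $Q^n_{\mathcal{F}_A}\cong M(\mathcal{C}^n_0,\lambda_A)$ which is equivariant with respect to the action of $H=\langle h_1,\dots,h_n\rangle\cong(\mathbb{Z}_2)^n$ on $Q^n_{\mathcal{F}_A}$ and the natural $(\mathbb{Z}_2)^n$-action on $M(\mathcal{C}^n_0,\lambda_A)$, under the isomorphism $h_i\mapsto e_i$.
   Context: $\mathcal{C}^n=\{x\in\mathbb{R}^n: -\tfrac14\le x_i\le\tfrac14\}$; $\mathbf{F}(i)$, $\mathbf{F}(-i)$ ($1\le i\le n$) are the facets in $\{x_i=\tfrac14\}$, $\{x_i=-\tfrac14\}$. Binary matrices have entries in $\mathbb{Z}_2$; $A^i_k$ denotes the $(i,k)$ entry; $\widetilde A=A+I_n$. $\mathcal{F}_A$ pairs $\mathbf{F}(j)$ with $\mathbf{F}(-j)$ via $\tau^A_j(x)=y$ with $y_{|j|}=-x_{|j|}$ and $y_k=(-1)^{A^{|j|}_k}x_k$ for $k\ne|j|$; $Q^n_{\mathcal{F}_A}$ is the quotient of $\mathcal{C}^n$ by the equivalence relation generated by $x\sim\tau^A_j(x)$, $x\in\mathbf{F}(j)$. For $1\le i\le n$, $h_i:\mathcal{C}^n\to\mathcal{C}^n$ negates the $i$-th coordinate; these commute with the maps $\tau^A_j$ and hence $H=\langle h_1,\dots,h_n\rangle$ acts on $Q^n_{\mathcal{F}_A}$. $\mathcal{C}^n_0=\{x\in\mathbb{R}^n:0\le x_i\le\tfrac14\}$,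 with facets $\overline F_j=\mathcal{C}^n_0\cap\{x_j=0\}$ and $\overline F^*_j=\mathcal{C}^n_0\cap\{x_j=\tfrac14\}$. Let $e_1,\dots,e_n$ be the standard basis of $(\mathbb{Z}_2)^n$; $\lambda_A(\overline F_j)=e_j$ and $\lambda_A(\overline F^*_j)=\sum_k\widetilde A^j_k e_k$ (the $j$-th row of $\widetilde A$). Glue-back construction: for a nice manifold with corners $W$ and a function $\mu$ from its facets to $(\mathbb{Z}_2)^m$, for a face $f$ let $G_f$ be the subgroup generated by $\mu(F)$ over facets $F\supseteq f$ (and $G_W=0$); for $p\in W$ let $f(p)$ be the face containing $p$ in its relative interior. $M(W,\mu)=W\times(\mathbb{Z}_2)^m/\sim$ where $(p,g)\sim(p',g')$ iff $p=p'$ and $g-g'\in G_{f(p)}$. The natural $(\mathbb{Z}_2)^m$-action is $g\cdot[(p,g_0)]=[(p,g_0+g)]$. *)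

From Stdlib Require Import Reals Lra.
From Stdlib Require Import Relations.Relation_Operators.
From mathcomp Require Import all_boot.

Set Implicit Arguments.
Unset Strict Implicit.

Local Open Scope R_scope.

Definition pt (n : nat) := 'I_n -> R.

Definition cube_pred (n : nat) (x : pt n) : Prop := forall i, - / 4 <= x i <= / 4.
Definition cube (n : nat) := {x : pt n | cube_pred x}.
Definition cube0_pred (n : nat) (x : pt n) : Prop := forall i, 0 <= x i <= / 4.
Definition cube0 (n : nat) := {x : pt n | cube0_pred x}.

(* subspace topology (of the Euclidean = sup-norm topology on R^n) *)
Definition sub_open (n : nat) (P : pt n -> Prop) (U : {x : pt n | P x} -> Prop) : Prop :=
  forall x, U x -> exists eps, 0 < eps /\
    forall y : {x : pt n | P x},
      (forall i, Rabs (proj1_sig y i - proj1_sig x i) < eps) -> U y.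

Definition quot (T : Type) (E : T -> T -> Prop) := {S : T -> Prop | exists x, S = E x}.
Definition qproj (T : Type) (E : T -> T -> Prop) (x : T) : quot E :=
  exist (fun S => exists y, S = E y) (E x) (ex_intro (fun y => E x = E y) x (@Logic.eq_refl _ (E x))).
Definition quot_open (T : Type) (E : T -> T -> Prop) (openT : (T -> Prop) -> Prop)
  (V : quot E -> Prop) : Prop := openT (fun x => V (qproj E x)).

Definition continuous (X Y : Type) (oX : (X -> Prop) -> Prop) (oY : (Y -> Prop) -> Prop)
  (f : X -> Y) : Prop := forall V, oY V -> oX (fun x => V (f x)).

(* binary n x n matrices: A i k is the (i,k) entry, true = 1 in Z_2 *)
Definition bmx (n : nat) := 'I_n -> 'I_n -> bool.

(* signed facet index j = (|j|, sign): (i,true) is F(i), (i,false) is F(-i) *)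
Definition on_facet (n : nat) (x : pt n) (j : 'I_n * bool) : Prop :=
  x j.1 = (if j.2 then / 4 else - / 4).

Definition tau (n : nat) (A : bmx n) (j : 'I_n * bool) (x : pt n) : pt n :=
  fun k => if k == j.1 then - x k else if A j.1 k then - x k else x k.

Definition Qrel (n : nat) (A : bmx n) (x y : cube n) : Prop :=
  exists j, on_facet (proj1_sig x) j /\ proj1_sig y = tau A j (proj1_sig x).

Definition QE (n : nat) (A : bmx n) : cube n -> cube n -> Prop :=
  clos_refl_sym_trans (cube n) (Qrel A).

Definition QF (n : nat) (A : bmx n) := quot (QE A).
Definition QF_open (n : nat) (A : bmx n) : (QF A -> Prop) -> Prop :=
  quot_open (@sub_open n (@cube_pred n)).

Definition hpt (n : nat) (i : 'I_n) (x : pt n) : pt n :=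
  fun k => if k == i then - x k else x k.

Lemma hpt_cube (n : nat) (i : 'I_n) (x : pt n) : cube_pred x -> cube_pred (hpt i x).
Proof.
  move=> Hx k; rewrite /hpt; case: (k == i); have := Hx k; lra.
Qed.

Definition hmap (n : nat) (i : 'I_n) (x : cube n) : cube n :=
  exist _ (hpt i (proj1_sig x)) (hpt_cube i (proj2_sig x)).

Definition z2v (n : nat) := 'I_n -> bool.
Definition addv (n : nat) (g h : z2v n) : z2v n := fun k => xorb (g k) (h k).
Definition ev (n : nat) (i : 'I_n) : z2v n := fun k => k == i.

(* facets of C^n_0: (j,false) is Fbar_j = {x_j = 0}, (j,true) is Fbar*_j = {x_j = 1/4} *)
Definition cfacet (n : nat) := ('I_n * bool)%type.
Definition on_cfacet (n : nat) (x : pt n) (F : cfacet n) : Prop :=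
  x F.1 = (if F.2 then / 4 else 0).

Definition lambdaA (n : nat) (A : bmx n) (F : cfacet n) : z2v n :=
  if F.2 then (fun k => xorb (A F.1 k) (F.1 == k)) else ev F.1.

(* v lies in G_{f(p)}: the subgroup generated by mu(F), F facets containing f(p)
   (equivalently containing p) *)
Definition inG (n : nat) (mu : cfacet n -> z2v n) (p : pt n) (v : z2v n) : Prop :=
  exists c : cfacet n -> bool,
    (forall F, c F -> on_cfacet p F) /\
    v = (fun k => \big[addb/false]_(F : cfacet n) (c F && mu F k)).

Definition ME (n : nat) (mu : cfacet n -> z2v n) (a b : cube0 n * z2v n) : Prop :=
  a.1 = b.1 /\ inG mu (proj1_sig a.1) (addv a.2 b.2).

(* product topology on C^n_0 x (Z_2)^n, (Z_2)^n discrete *)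
Definition prod_open (n : nat) (U : cube0 n * z2v n -> Prop) : Prop :=
  forall a, U a -> exists eps, 0 < eps /\
    forall q : cube0 n, (forall i, Rabs (proj1_sig q i - proj1_sig a.1 i) < eps) ->
      U (q, a.2).

Definition MW (n : nat) (mu : cfacet n -> z2v n) := quot (ME mu).
Definition MW_open (n : nat) (mu : cfacet n -> z2v n) : (MW mu -> Prop) -> Prop :=
  quot_open (@prod_open n).

(* Folding the cube onto its positive orthant, x |-> (|x|, ε) with ε_k = [x_k < 0],
   identifies C^n with C^n_0 × (Z_2)^n up to the coordinates where x_k = 0.  At a point
   x of F(±j) the pairing τ^A_j keeps |x| and flips the signs of coordinate j and of the
   coordinates k with A_jk = 1, i.e. it adds the j-th row of Ã = λ_A(F*_j) to ε; sign
   changes in coordinates where x_k = 0 are absorbed by the generators e_k = λ_A(F_k).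
   Conversely each generator of G_{f(p)} is realised by one pairing (for F*_j) or acts
   trivially (for F_j).  So folding and unfolding descend to mutually inverse maps of the
   quotients; h_i flips the i-th sign, i.e. adds e_i. *)
From Stdlib Require Import Reals Lra.
From Stdlib Require Import Relations.Relation_Operators.
From Stdlib Require Import Classical ClassicalEpsilon FunctionalExtensionality PropExtensionality.
From mathcomp Require Import all_boot.
Set Implicit Arguments.
Unset Strict Implicit.
Local Open Scope R_scope.

Lemma proj1_sig_inj (T : Type) (P : T -> Prop) (u v : sig P) : sval u = sval v -> u = v.
Proof. case: u v => [x Px] [y Py] /= exy; subst y; f_equal; exact: proof_irrelevance. Qed.

Section Quotient.
Variables (T : Type) (E : T -> T -> Prop).
Hypotheses (E_refl : forall a, E a a) (E_sym : forall a b, E a b -> E b a)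
  (E_trans : forall a b c, E a b -> E b c -> E a c).

Lemma qproj_eq a b : E a b -> qproj E a = qproj E b.
Proof.
move=> Eab; apply: proj1_sig_inj => /=.
apply: functional_extensionality => c; apply: propositional_extensionality; split; eauto.
Qed.

Lemma qproj_inj a b : qproj E a = qproj E b -> E a b.
Proof. by move/(f_equal sval) => /= ->. Qed.

Definition quot_rep (S : quot E) : T :=
  sval (constructive_indefinite_description _ (proj2_sig S)).

Lemma quot_repK S : qproj E (quot_rep S) = S.
Proof.
apply: proj1_sig_inj; rewrite /quot_rep.
by case: (constructive_indefinite_description _ _) => x /= ->.
Qed.

Lemma qproj_surj S : exists x, S = qproj E x.
Proof. by exists (quot_rep S); rewrite quot_repK. Qed.

Definition quot_lift (U : Type) (F : T -> U) (S : quot E) : U := F (quot_rep S).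

Section Lift.
Variables (U : Type) (F : T -> U).
Hypothesis F_compat : forall a b, E a b -> F a = F b.

Lemma quot_liftE x : quot_lift F (qproj E x) = F x.
Proof. by apply: F_compat; apply: qproj_inj; rewrite quot_repK. Qed.

Lemma quot_lift_continuous (oT : (T -> Prop) -> Prop) (oU : (U -> Prop) -> Prop) :
  continuous oT oU F -> continuous (quot_open oT) oU (quot_lift F).
Proof.
move=> cF V /cF; rewrite /quot_open.
by have -> : (fun x => V (quot_lift F (qproj E x))) = (fun x => V (F x))
  by apply: functional_extensionality => x; rewrite quot_liftE.
Qed.
End Lift.
End Quotient.

Lemma finite_common_radius (I : eqType) (P : I -> R -> Prop) (s : seq I) :
  (forall t e e', P t e -> 0 < e' <= e -> P t e') ->
  (forall t, t \in s -> exists e, 0 < e /\ P t e) ->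
  exists e, 0 < e /\ forall t, t \in s -> P t e.
Proof.
move=> P_shrink; elim: s => [|a s IHs] Hs; first by exists 1; split; [lra|].
have [ea [ea_gt0 Pa]] := Hs a (mem_head a s).
have [es [es_gt0 Ps]] : exists e, 0 < e /\ forall t, t \in s -> P t e.
  by apply: IHs => t ts; apply: Hs; rewrite in_cons ts orbT.
have emin_gt0 := Rmin_pos _ _ ea_gt0 es_gt0.
exists (Rmin ea es); split => // t; rewrite in_cons => /orP [/eqP ->|ts].
  by apply: P_shrink Pa _; split => //; apply: Rmin_l.
by apply: P_shrink (Ps t ts) _; split => //; apply: Rmin_r.
Qed.

Definition is_neg (r : R) : bool := if Rlt_dec r 0 then true else false.

Lemma is_neg_opp r : r <> 0 -> is_neg (- r) = ~~ is_neg r.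
Proof. by move/Rdichotomy; rewrite /is_neg; case: Rlt_dec; case: Rlt_dec => //= ? ?; lra. Qed.

Lemma is_neg_near (x : R) (e : R) :
  x <> 0 -> e <= Rabs x -> forall y, Rabs (y - x) < e -> is_neg y = is_neg x.
Proof.
move=> x_neq0 e_le y; rewrite /is_neg; case: Rlt_dec; case: Rlt_dec => //= ? ?;
  move: e_le; unfold Rabs; repeat case: Rcase_abs; lra.
Qed.

Section Points.
Variable n : nat.

Lemma is_neg_locally_constant (x : pt n) : exists e, 0 < e /\ forall y : pt n,
  (forall i, Rabs (y i - x i) < e) -> forall k, x k <> 0 -> is_neg (y k) = is_neg (x k).
Proof.
have [e [e_gt0 He]] : exists e, 0 < e /\
    forall k, k \in enum 'I_n -> x k <> 0 -> e <= Rabs (x k).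
  apply: finite_common_radius => [k e e' He [_ e'_le] /He|k _]; first lra.
  case: (Req_dec_T (x k) 0) => xk; first by exists 1; split; [lra|].
  by exists (Rabs (x k)); split => [|_]; [apply: Rabs_pos_lt | lra].
exists e; split => // y Hy k xk.
exact: is_neg_near xk (He k (mem_enum _ k) xk) _ (Hy k).
Qed.

Lemma prod_open_uniform (U : cube0 n * z2v n -> Prop) (p : cube0 n) : prod_open U ->
  exists e, 0 < e /\ forall g : z2v n, U (p, g) -> forall q : cube0 n,
    (forall i, Rabs (sval q i - sval p i) < e) -> U (q, g).
Proof.
move=> U_open.
have [e [e_gt0 He]] : exists e, 0 < e /\ forall g, g \in enum {ffun 'I_n -> bool} ->
    U (p, fun k => g k) -> forall q : cube0 n,
    (forall i, Rabs (sval q i - sval p i) < e) -> U (q, fun k => g k).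
  apply: finite_common_radius => [g e e' He [_ e'_le] Ug q Hq|g _].
    by apply: (He Ug q) => i; have := Hq i; lra.
  case: (classic (U (p, fun k => g k))) => [/U_open [e [e_gt0 He]]|notU].
    by exists e; split => // _; apply: He.
  by exists 1; split; [lra|].
exists e; split => // g.
have -> : g = (fun k => [ffun k => g k] k).
  by apply: functional_extensionality => k; rewrite ffunE.
exact: He (mem_enum _ _).
Qed.

Definition absv (x : pt n) : pt n := fun k => Rabs (x k).
Definition signv (x : pt n) : z2v n := fun k => is_neg (x k).
Definition signed (p : pt n) (g : z2v n) : pt n := fun k => if g k then - p k else p k.

Lemma absv_cube0 x : cube_pred x -> cube0_pred (absv x).
Proof. by move=> Hx k; have := Hx k; rewrite /absv; unfold Rabs; case: Rcase_abs; lra. Qed.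

Lemma signed_cube p g : cube0_pred p -> cube_pred (signed p g).
Proof. by move=> Hp k; have := Hp k; rewrite /signed; case: (g k); lra. Qed.

Definition fold_cube (x : cube n) : cube0 n * z2v n :=
  (exist _ (absv (sval x)) (absv_cube0 (proj2_sig x)), signv (sval x)).

Definition unfold_cube (a : cube0 n * z2v n) : cube n :=
  exist _ (signed (sval a.1) a.2) (signed_cube a.2 (proj2_sig a.1)).

Lemma fold_cubeK x : unfold_cube (fold_cube x) = x.
Proof.
apply: proj1_sig_inj; apply: functional_extensionality => k.
rewrite /= /signed /absv /signv /is_neg; case: Rlt_dec => /=; unfold Rabs; case: Rcase_abs; lra.
Qed.

Lemma fold_unfold_cube1 a : (fold_cube (unfold_cube a)).1 = a.1.
Proof.
apply: proj1_sig_inj; apply: functional_extensionality => k.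
have := proj2_sig a.1 k; rewrite /= /absv /signed; case: (a.2 k) => ?; unfold Rabs;
  case: Rcase_abs; lra.
Qed.

Lemma fold_unfold_cube2 a k : sval a.1 k <> 0 -> (fold_cube (unfold_cube a)).2 k = a.2 k.
Proof.
case: a => [[p Hp] g] /= /Rdichotomy pk; have := Hp k; rewrite /signv /signed /is_neg.
by case: (g k); case: Rlt_dec => //= ? ?; exfalso; lra.
Qed.

Lemma unfold_cube_continuous :
  continuous (@prod_open n) (@sub_open n (@cube_pred n)) unfold_cube.
Proof.
move=> V V_open [p g] /V_open [e [e_gt0 He]].
exists e; split => // q Hq; apply: He => i /=; rewrite /signed.
case: (g i); last exact: Hq.
have -> : - sval q i - - sval p i = - (sval q i - sval p i) by ring.
by rewrite Rabs_Ropp; apply: Hq.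
Qed.

Lemma fold_hmap1 i x : (fold_cube (hmap i x)).1 = (fold_cube x).1.
Proof.
apply: proj1_sig_inj; apply: functional_extensionality => k.
by rewrite /= /absv /hpt; case: (k == i); rewrite ?Rabs_Ropp.
Qed.

Lemma fold_hmap2 i x k : sval x k <> 0 ->
  (fold_cube (hmap i x)).2 k = xorb ((fold_cube x).2 k) (ev i k).
Proof.
move=> xk; rewrite /= /signv /hpt /ev; case: (k == i); last by case: is_neg.
by rewrite is_neg_opp //; case: is_neg.
Qed.
End Points.

Lemma xorbE (a b : bool) : xorb a b = addb a b.
Proof. by case: a; case: b. Qed.

Section GlueBack.
Variables (n : nat) (mu : cfacet n -> z2v n).
Implicit Types (p : pt n) (v w : z2v n).

Lemma inG_ext p v w : inG mu p v -> (forall k, v k = w k) -> inG mu p w.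
Proof. by move=> Gv vw; have <- : v = w by apply: functional_extensionality. Qed.

Lemma inG0 p : inG mu p (fun _ => false).
Proof.
by exists (fun _ => false); split => //; apply: functional_extensionality => k; rewrite big1.
Qed.

Lemma inG_add p v w : inG mu p v -> inG mu p w -> inG mu p (addv v w).
Proof.
move=> [c1 [c1_on ->]] [c2 [c2_on ->]].
exists (fun F => xorb (c1 F) (c2 F)); split.
  by move=> F; case c1F: (c1 F); case c2F: (c2 F) => //= _; [apply: c1_on | apply: c2_on].
apply: functional_extensionality => k; rewrite /addv xorbE -big_split /=.
by apply: eq_bigr => F _; rewrite xorbE andb_addl.
Qed.

Lemma inG_facet p F : on_cfacet p F -> inG mu p (mu F).
Proof.
move=> pF; exists (fun G => G == F); split; first by move=> G /eqP ->.
apply: functional_extensionality => k.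
by rewrite (bigD1 F) //= eqxx big1 ?addbF // => G /negbTE ->.
Qed.

Lemma inG_ind p (P : z2v n -> Prop) :
  P (fun _ => false) -> (forall v w, P v -> P w -> P (addv v w)) ->
  (forall F, on_cfacet p F -> P (mu F)) -> forall v, inG mu p v -> P v.
Proof.
move=> P0 P_add P_facet _ [c [c_on ->]].
elim: (index_enum _) => [|F s IHs].
  by have -> : (fun k => \big[addb/false]_(F <- [::]) (c F && mu F k)) = (fun _ => false)
    by apply: functional_extensionality => k; rewrite big_nil.
have -> : (fun k => \big[addb/false]_(G <- F :: s) (c G && mu G k)) =
    addv (fun k => c F && mu F k) (fun k => \big[addb/false]_(G <- s) (c G && mu G k)).
  by apply: functional_extensionality => k; rewrite big_cons /addv xorbE.
apply: P_add IHs; case cF: (c F); first exact: P_facet (c_on F cF).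
by have -> : (fun k => false && mu F k) = (fun _ => false).
Qed.

Lemma ME_refl a : ME mu a a.
Proof. by split => //; apply: inG_ext (inG0 _) _ => k; rewrite /addv xorbE addbb. Qed.

Lemma ME_sym a b : ME mu a b -> ME mu b a.
Proof.
move=> [ab Gab]; split => //; rewrite -ab; apply: inG_ext Gab _ => k.
by rewrite /addv !xorbE addbC.
Qed.

Lemma ME_trans a b c : ME mu a b -> ME mu b c -> ME mu a c.
Proof.
move=> [ab Gab] [bc Gbc]; split; first by rewrite ab.
rewrite -ab in Gbc; apply: inG_ext (inG_add Gab Gbc) _ => k.
by rewrite /addv !xorbE addbA addbK.
Qed.

Lemma ME_facet (p : cube0 n) g F : on_cfacet (sval p) F -> ME mu (p, g) (p, addv g (mu F)).
Proof.
move=> pF; split => //; apply: inG_ext (inG_facet pF) _ => k.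
by rewrite /= /addv !xorbE addKb.
Qed.

Lemma ME_translate a b v : ME mu a b -> ME mu (a.1, addv a.2 v) (b.1, addv b.2 v).
Proof.
move=> [ab Gab]; split => //; apply: inG_ext Gab _ => k.
by rewrite /= /addv !xorbE addbACA addbb addbF.
Qed.
End GlueBack.

Section Lambda.
Variables (n : nat) (A : bmx n).

(* The facets F_k = {x_k = 0} contain p exactly when p_k = 0, and λ_A(F_k) = e_k. *)
Lemma inG_zero_coords p (v : z2v n) : (forall k, v k -> p k = 0) -> inG (lambdaA A) p v.
Proof.
move=> vp; exists (fun F => ~~ F.2 && v F.1); split.
  by move=> [j b] /= /andP [/negbTE -> /vp]; rewrite /on_cfacet.
apply: functional_extensionality => k.
rewrite (bigD1 (k, false)) //= /lambdaA /ev /= eqxx andbT big1 ?addbF // => [[j b]] /=.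
case: b => //=; case kj: (k == j); rewrite ?andbF //.
by move/eqP: kj => ->; rewrite eqxx.
Qed.

Lemma ME_zero_coords (a b : cube0 n * z2v n) : a.1 = b.1 ->
  (forall k, sval a.1 k <> 0 -> a.2 k = b.2 k) -> ME (lambdaA A) a b.
Proof.
move=> ab ab2; split => //; apply: inG_zero_coords => k; rewrite /addv.
by case: (Req_dec_T (sval a.1 k) 0) => // /ab2 ->; rewrite xorbE addbb.
Qed.
End Lambda.

Section Gluing.
Variables (n : nat) (A : bmx n).
Hypothesis A_diag0 : forall i, A i i = false.
Local Notation mu := (lambdaA A).

Lemma absv_tau j (x : pt n) : absv (tau A j x) = absv x.
Proof.
apply: functional_extensionality => k; rewrite /absv /tau.
by case: (k == j.1); rewrite ?Rabs_Ropp //; case: (A j.1 k); rewrite ?Rabs_Ropp.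
Qed.

Lemma signv_tau j (x : pt n) k : x k <> 0 ->
  signv (tau A j x) k = xorb (signv x k) (mu (j.1, true) k).
Proof.
rewrite /signv /tau /lambdaA /=; case: (eqVneq k j.1) => [->|_] xk.
  by rewrite A_diag0 is_neg_opp //; case: is_neg.
by case: (A j.1 k); rewrite ?is_neg_opp //; case: is_neg.
Qed.

Lemma on_facet_absv (x : pt n) j : on_facet x j -> on_cfacet (absv x) (j.1, true).
Proof.
by rewrite /on_facet /on_cfacet /absv /= => ->; case: j.2; rewrite ?Rabs_Ropp Rabs_right; lra.
Qed.

Lemma Qrel_fold_ME x y : Qrel A x y -> ME mu (fold_cube x) (fold_cube y).
Proof.
move=> [j [xj yx]].
have fold_yx1 : (fold_cube y).1 = (fold_cube x).1.
  by apply: proj1_sig_inj; rewrite /= yx absv_tau.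
apply: (ME_trans (@ME_facet _ mu (fold_cube x).1 (fold_cube x).2 _ (on_facet_absv xj))).
apply: ME_zero_coords => [|k /=]; first by rewrite fold_yx1.
move=> xk; rewrite yx signv_tau // => x0; apply: xk.
by rewrite /= /absv x0 Rabs_R0.
Qed.

Lemma QE_fold_ME x y : QE A x y -> ME mu (fold_cube x) (fold_cube y).
Proof.
elim => [a b /Qrel_fold_ME //| a | a b _ IH | a b c _ IH1 _ IH2].
- exact: ME_refl.
- exact: ME_sym.
- exact: ME_trans IH1 IH2.
Qed.

Lemma unfold_facet_QE (p : cube0 n) g F : on_cfacet (sval p) F ->
  QE A (unfold_cube (p, g)) (unfold_cube (p, addv g (mu F))).
Proof.
case: F => j [] pF.
- apply: rst_step; exists (j, ~~ g j); split.
    by rewrite /on_facet /= /signed; case: (g j); rewrite pF.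
  apply: functional_extensionality => k; rewrite /tau /lambdaA /addv /= /signed /=.
  case: (eqVneq k j) => [->|kj].
    by rewrite A_diag0; case: (g j); rewrite ?Ropp_involutive.
  by case: (A j k); case: (g k); rewrite /= ?Ropp_involutive.
- have -> : unfold_cube (p, addv g (mu (j, false))) = unfold_cube (p, g); last exact: rst_refl.
  apply: proj1_sig_inj; apply: functional_extensionality => k.
  rewrite /= /signed /addv /lambdaA /ev /=; case: (eqVneq k j) => [->|_]; last by case: (g k).
  by rewrite pF; case: (g j); rewrite /= ?Ropp_0.
Qed.

Lemma ME_unfold_QE a b : ME mu a b -> QE A (unfold_cube a) (unfold_cube b).
Proof.
case: a b => [p g] [q h] [/= <- Ggh].
suff unfold_add : forall v, inG mu (sval p) v ->
    forall g, QE A (unfold_cube (p, g)) (unfold_cube (p, addv g v)).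
  have -> : h = addv g (addv g h)
    by apply: functional_extensionality => k; rewrite /addv !xorbE addKb.
  exact: unfold_add.
apply: inG_ind => [g0|v w Pv Pw g0|F pF g0].
- have -> : addv g0 (fun _ => false) = g0
    by apply: functional_extensionality => k; rewrite /addv xorbE addbF.
  exact: rst_refl.
- have -> : addv g0 (addv v w) = addv (addv g0 v) w
    by apply: functional_extensionality => k; rewrite /addv !xorbE addbA.
  exact: rst_trans (Pv g0) (Pw _).
- exact: unfold_facet_QE.
Qed.

Lemma unfold_fold_ME a : ME mu (fold_cube (unfold_cube a)) a.
Proof. by apply: ME_zero_coords => [|k]; rewrite fold_unfold_cube1 // => /fold_unfold_cube2. Qed.

Definition fold_quot : QF A -> MW mu := quot_lift (fun x => qproj (ME mu) (fold_cube x)).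
Definition unfold_quot : MW mu -> QF A := quot_lift (fun a => qproj (QE A) (unfold_cube a)).

Lemma qproj_fold_compat x y :
  QE A x y -> qproj (ME mu) (fold_cube x) = qproj (ME mu) (fold_cube y).
Proof. by move/QE_fold_ME; apply: qproj_eq; [apply: ME_sym | apply: ME_trans]. Qed.

Lemma qproj_unfold_compat a b :
  ME mu a b -> qproj (QE A) (unfold_cube a) = qproj (QE A) (unfold_cube b).
Proof. by move/ME_unfold_QE; apply: qproj_eq; [apply: rst_sym | apply: rst_trans]. Qed.

Lemma fold_quotE x : fold_quot (qproj (QE A) x) = qproj (ME mu) (fold_cube x).
Proof. exact: (quot_liftE (@rst_refl _ _) qproj_fold_compat). Qed.

Lemma unfold_quotE a : unfold_quot (qproj (ME mu) a) = qproj (QE A) (unfold_cube a).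
Proof. exact: (quot_liftE (@ME_refl _ _) qproj_unfold_compat). Qed.

Lemma fold_quotK S : unfold_quot (fold_quot S) = S.
Proof. by have [x ->] := qproj_surj S; rewrite fold_quotE unfold_quotE fold_cubeK. Qed.

Lemma unfold_quotK S : fold_quot (unfold_quot S) = S.
Proof.
have [a ->] := qproj_surj S; rewrite unfold_quotE fold_quotE.
by apply: qproj_eq (unfold_fold_ME a); [apply: ME_sym | apply: ME_trans].
Qed.

Lemma unfold_quot_continuous : continuous (@MW_open n mu) (@QF_open n A) unfold_quot.
Proof.
apply: quot_lift_continuous; first exact: ME_refl.
  exact: qproj_unfold_compat.
by move=> V /unfold_cube_continuous.
Qed.

(* The sign vector may jump only at zero coordinates of x, where the jump is absorbed by
   the gluing; uniformity over (Z_2)^n then controls the first component. *)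
Lemma qproj_fold_continuous :
  continuous (@sub_open n (@cube_pred n)) (@MW_open n mu) (fun x => qproj (ME mu) (fold_cube x)).
Proof.
move=> V V_open x Vx.
have [e1 [e1_gt0 He1]] := prod_open_uniform (fold_cube x).1 V_open.
have [e2 [e2_gt0 He2]] := is_neg_locally_constant (sval x).
exists (Rmin e1 e2); split => [|y yx]; first exact: Rmin_pos.
have V_signy : V (qproj (ME mu) ((fold_cube x).1, (fold_cube y).2)).
  rewrite (@qproj_eq _ _ (@ME_sym _ mu) (@ME_trans _ mu) _ (fold_cube x)) //.
  apply: ME_zero_coords => // k /= xk; apply: He2 => [i|].
    exact: Rlt_le_trans (yx i) (Rmin_r _ _).
  by move=> x0; apply: xk; rewrite /absv x0 Rabs_R0.
apply: He1 V_signy (fold_cube y).1 _ => i /=.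
apply: Rle_lt_trans (Rabs_triang_inv2 _ _) _.
exact: Rlt_le_trans (yx i) (Rmin_l _ _).
Qed.

Lemma fold_quot_continuous : continuous (@QF_open n A) (@MW_open n mu) fold_quot.
Proof.
apply: quot_lift_continuous qproj_fold_continuous; first exact: rst_refl.
exact: qproj_fold_compat.
Qed.

Lemma fold_hmap_ME i x :
  ME mu (fold_cube (hmap i x)) ((fold_cube x).1, addv (fold_cube x).2 (ev i)).
Proof.
apply: ME_zero_coords => [|k]; first exact: fold_hmap1.
rewrite fold_hmap1 => xk; apply: fold_hmap2 => x0; apply: xk.
by rewrite /= /absv x0 Rabs_R0.
Qed.

Lemma fold_quot_hmap i x p g :
  fold_quot (qproj (QE A) x) = qproj (ME mu) (p, g) ->
  fold_quot (qproj (QE A) (hmap i x)) = qproj (ME mu) (p, addv g (ev i)).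
Proof.
rewrite !fold_quotE => /(qproj_inj (@ME_refl _ mu)) fx_pg.
apply: qproj_eq; [exact: ME_sym | exact: ME_trans |].
exact: ME_trans (fold_hmap_ME i x) (ME_translate (ev i) fx_pg).
Qed.
End Gluing.

Theorem mainTheorem14 (n : nat) (A : bmx n) (hA : forall i, A i i = false) :
  exists (f : QF A -> MW (lambdaA A)) (g : MW (lambdaA A) -> QF A),
    (forall a, g (f a) = a) /\ (forall b, f (g b) = b) /\
    continuous (@QF_open n A) (@MW_open n (lambdaA A)) f /\
    continuous (@MW_open n (lambdaA A)) (@QF_open n A) g /\
    (forall (i : 'I_n) (x : cube n) (p : cube0 n) (g0 : z2v n),
        f (qproj (QE A) x) = qproj (ME (lambdaA A)) (p, g0) ->
        f (qproj (QE A) (hmap i x)) = qproj (ME (lambdaA A)) (p, addv g0 (ev i))).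
Proof.
exists (@fold_quot n A), (@unfold_quot n A).
split; first exact: fold_quotK.
split; first exact: unfold_quotK.
split; first exact: fold_quot_continuous.
split; first exact: unfold_quot_continuous.
exact: fold_quot_hmap.
Qed.
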